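(* Let $T=(V,E)$ be a finite rooted binary tree with root $\rho$, $\Pr$ a probability distribution over a finite set of queries, and $k$ a positive integer. Consider the dynamic-programming algorithm described in the context, which fills the table $D(u,\kappa,v)$ bottom-up and then calls $\mathrm{ConstructSolution}(\rho,k,\epsilon)$. Then the set of nodes printed by this call is an optimal solution $R^*$, i.e., it maximizes the benefit $B(R)$ over all sets $R$ of non-leaf nodes of $T$ with $|R|\le k$, and $D(\rho,k,\epsilon)$ equals this optimal benefit.
   Context: Setting. $T=(V,E)$ is a finite rooted tree in which every non-leaf node $u$ has exactly two children, a left child $\ell(u)$ and a right child $r(u)$. $T(u)$ is the set of nodes of the subtree rooted at $u$ (including $u$), $A(u)$ the set of proper ancestors of $u$, and for $v\in A(u)$, $\mathrm{path}(u,v)$ the nodes strictly between $u$ and $v$. Each non-leaf node is associated with a variable of a finite set $X$; $\mathrm{vars}(u)$ is the set of variables associated with nodes of $T(u)$. Each query $q$ determines $Z_q\subseteq X$. For $R\subseteq V$, $w\in V$: $I_q(w,R)=1$ iff $w\in R$, $\mathrm{vars}(w)\subseteq Z_q$, and no $x\in A(w)\cap R$ has $\mathrm{vars}(x)\subseteq Z_q$; else $0$; $\mathbb{E}[I(w,R)]=\sum_q\Pr(q)I_q(w,R)$. Nodes have partial costs $c(x)\ge 0$; total cost $C(w)=\sum_{x\in T(w)}c(x)$. Benefit $B(R)=\sum_{w\in R}\mathbb{E}[I(w,R)]C(w)$; partial benefit $B_u(R)=\sum_{w\in R\cap T(u)}\mathbb{E}[I(w,R)]C(w)$. $\epsilon$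 is an auxiliary symbol not in $V$, $A^\epsilon(u)=A(u)\cup\{\epsilon\}$, $\mathrm{path}(u,\epsilon)=A(u)$; $\epsilon$ is regarded as belonging to every set but not counted in its size and contributing nothing, so $B_u(S\cup\{\epsilon\})=B_u(S)$. In particular $B_u(\{u,v\})=\mathbb{E}[I(u,\{u,v\})]C(u)$ and $B_u(\{u,\epsilon\})=\mathbb{E}[I(u,\{u\})]C(u)$. Algorithm. For $u\in V$, $v\in A^\epsilon(u)$ and integers $0\le\kappa\le\min\{k,|T(u)|\}$, $D(u,\kappa,v)$ is intended to be the maximum of $B_u(R)$ over sets $R$ with $|T(u)\cap R|\le\kappa$, $v\in R$, $\mathrm{path}(u,v)\cap R=\emptyset$. It is computed bottom-up as $D(u,\kappa,v)=\max\{D^{+}(u,\kappa,v),D^{-}(u,\kappa,v)\}$ where: if $u$ is a leaf, $D^{-}(u,\kappa,v)=0$ and $D^{+}(u,\kappa,v)=-\infty$ (leaves are never selected); if $u$ is not a leaf, $D^{+}(u,\kappa,v)=B_u(\{u,v\})+\max_{\kappa_\ell+\kappa_r=\kappa-1}\{D(\ell(u),\kappa_\ell,u)+D(r(u),\kappa_r,u)\}$ (and $-\infty$ if $\kappa=0$), $D^{-}(u,\kappa,v)=\max_{\kappa_\ell+\kappa_r=\kappa}\{D(\ell(u),\kappa_\ell,v)+D(r(u),\kappa_r,v)\}$, the maxima ranging over nonnegative $\kappa_\ell,\kappa_r$ for which the entries are defined. $\mathrm{ConstructSolution}(u,\kappa,v)$: if $D(u,\kappa,v)=D^{+}(u,\kappa,v)$,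 print $u$; if $\kappa=1$ return; otherwise take $(\kappa_\ell^*,\kappa_r^* )$ maximizing $D(\ell(u),\kappa_\ell,u)+D(r(u),\kappa_r,u)$ subject to $\kappa_\ell+\kappa_r=\kappa-1$ and call $\mathrm{ConstructSolution}(\ell(u),\kappa_\ell^*,u)$ and $\mathrm{ConstructSolution}(r(u),\kappa_r^*,u)$. Else take $(\kappa_\ell^*,\kappa_r^* )$ maximizing $D(\ell(u),\kappa_\ell,v)+D(r(u),\kappa_r,v)$ subject to $\kappa_\ell+\kappa_r=\kappa$ and call $\mathrm{ConstructSolution}(\ell(u),\kappa_\ell^*,v)$ and $\mathrm{ConstructSolution}(r(u),\kappa_r^*,v)$. *)

From HB Require Import structures.
From mathcomp Require Import all_boot all_order all_algebra.
Set Implicit Arguments. Unset Strict Implicit. Unset Printing Implicit Defensive.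
Import Order.TTheory GRing.Theory Num.Theory.
Local Open Scope ring_scope.

(* A finite rooted full binary tree.  A leaf carries its partial cost c;
   a non-leaf node carries its variable x, its partial cost c, and its
   left and right subtrees. *)
Inductive btree (X R : Type) :=
  | BLeaf of R
  | BNode of X & R & btree X R & btree X R.
Arguments BLeaf {X R}.
Arguments BNode {X R}.

(* Nodes are addressed by their path from the root: [::] is the root,
   rcons u false is the left child l(u), rcons u true the right child r(u).
   Proper ancestors of u are the proper prefixes of u; T(u) is the set of
   addresses having u as prefix. *)
Notation addr := (seq bool).

Section Defs.
Variables (R : realFieldType) (X Q : finType).
Implicit Types (s : btree X R).

Fixpoint bsize s : nat :=
  match s with BLeaf _ => 1%N | BNode _ _ l r => (bsize l + bsize r).+1 end.
Fixpoint tvars s : {set X} :=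
  match s with BLeaf _ => set0 | BNode x _ l r => x |: (tvars l :|: tvars r) end.
Fixpoint tcost s : R :=
  match s with BLeaf c => c | BNode _ c l r => c + tcost l + tcost r end.
Fixpoint costs_ge0 s : bool :=
  match s with BLeaf c => 0 <= c | BNode _ c l r => [&& 0 <= c, costs_ge0 l & costs_ge0 r] end.

Fixpoint subtree s (a : addr) : option (btree X R) :=
  match a with
  | [::] => Some s
  | b :: a' => match s with
               | BLeaf _ => None
               | BNode _ _ l r => subtree (if b then r else l) a'
               end
  end.

Definition is_internal s (a : addr) : bool :=
  if subtree s a is Some (BNode _ _ _ _) then true else false.

(* extended reals as option R, None = -infinity *)
Definition omax (a b : option R) : option R :=
  match a, b with
  | None, _ => b
  | _, None => a
  | Some x, Some y => Some (Num.max x y)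
  end.
Definition oadd (a b : option R) : option R :=
  match a, b with Some x, Some y => Some (x + y) | _, _ => None end.
Definition splitmax (F G : nat -> option R) (kap : nat) : option R :=
  \big[omax/None]_(i < kap.+1) oadd (F i) (G (kap - i)%N).

Variables (t : btree X R) (Pr : Q -> R) (Z : Q -> {set X}) (k : nat).

Definition vars (a : addr) : {set X} :=
  if subtree t a is Some s then tvars s else set0.
Definition Ctot (a : addr) : R :=
  if subtree t a is Some s then tcost s else 0.
Definition ancestors (w : addr) : seq addr := [seq take i w | i <- iota 0 (size w)].

Definition Iq (q : Q) (w : addr) (Rs : seq addr) : bool :=
  [&& w \in Rs, vars w \subset Z q &
      ~~ has (fun x => (x \in ancestors w) && (vars x \subset Z q)) Rs].
Definition EI (w : addr) (Rs : seq addr) : R := \sum_(q : Q) Pr q * (Iq q w Rs)%:R.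
Definition benefit (Rs : seq addr) : R := \sum_(w <- Rs) EI w Rs * Ctot w.
Definition pbenefit (u : addr) (Rs : seq addr) : R :=
  \sum_(w <- Rs | prefix u w) EI w Rs * Ctot w.
(* the set {v}, where epsilon (= None) is not counted *)
Definition eps_set (v : option addr) : seq addr := if v is Some v' then [:: v'] else [::].
Definition Bpair (u : addr) (v : option addr) : R := pbenefit u (u :: eps_set v).

Definition Dplus_of (Dl Dr : nat -> option addr -> option R) (u : addr)
    (v : option addr) (kap : nat) : option R :=
  if kap is kap'.+1 then
    oadd (Some (Bpair u v)) (splitmax (fun i => Dl i (Some u)) (fun i => Dr i (Some u)) kap')
  else None.
Definition Dminus_of (Dl Dr : nat -> option addr -> option R)
    (v : option addr) (kap : nat) : option R :=
  splitmax (fun i => Dl i v) (fun i => Dr i v) kap.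

(* Dt s u kap v = D(u, kap, v), where s is the subtree of t at u;
   entries outside 0 <= kap <= min{k, |T(u)|} are undefined (None, so they
   are ignored by the maxima).  For a leaf, D = max{-oo, 0} = 0. *)
Fixpoint Dt s (u : addr) (kap : nat) (v : option addr) {struct s} : option R :=
  if (kap <= minn k (bsize s))%N then
    match s with
    | BLeaf _ => omax None (Some 0)
    | BNode _ _ l r =>
        omax (Dplus_of (Dt l (rcons u false)) (Dt r (rcons u true)) u v kap)
             (Dminus_of (Dt l (rcons u false)) (Dt r (rcons u true)) v kap)
    end
  else None.

(* Construct s u kap v S : some run of ConstructSolution(u, kap, v)
   (ties in the argmax resolved arbitrarily) prints the sequence S. *)
Inductive Construct : btree X R -> addr -> nat -> option addr -> seq addr -> Prop :=
  | CLeaf c u kap v : Construct (BLeaf c) u kap v [::]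
  | CPlus1 x c l r u v :
      Dt (BNode x c l r) u 1 v = Dplus_of (Dt l (rcons u false)) (Dt r (rcons u true)) u v 1 ->
      Construct (BNode x c l r) u 1 v [:: u]
  | CPlus x c l r u kap v i Sl Sr :
      (1 < kap)%N ->
      Dt (BNode x c l r) u kap v = Dplus_of (Dt l (rcons u false)) (Dt r (rcons u true)) u v kap ->
      (i <= kap.-1)%N ->
      oadd (Dt l (rcons u false) i (Some u)) (Dt r (rcons u true) (kap.-1 - i) (Some u))
        = splitmax (fun j => Dt l (rcons u false) j (Some u))
                   (fun j => Dt r (rcons u true) j (Some u)) kap.-1 ->
      Construct l (rcons u false) i (Some u) Sl ->
      Construct r (rcons u true) (kap.-1 - i) (Some u) Sr ->
      Construct (BNode x c l r) u kap v (u :: Sl ++ Sr)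
  | CMinus x c l r u kap v i Sl Sr :
      Dt (BNode x c l r) u kap v <> Dplus_of (Dt l (rcons u false)) (Dt r (rcons u true)) u v kap ->
      (i <= kap)%N ->
      oadd (Dt l (rcons u false) i v) (Dt r (rcons u true) (kap - i) v)
        = splitmax (fun j => Dt l (rcons u false) j v)
                   (fun j => Dt r (rcons u true) j v) kap ->
      Construct l (rcons u false) i v Sl ->
      Construct r (rcons u true) (kap - i) v Sr ->
      Construct (BNode x c l r) u kap v (Sl ++ Sr).

Definition feasible (Rs : seq addr) : Prop :=
  [/\ uniq Rs, all (is_internal t) Rs & (size Rs <= k)%N].

End Defs.

(* Under a query q, a selected node w counts iff it is covered (vars w ⊆ Z q)
   and no selected proper ancestor is covered.  Since vars is monotone along
   the tree, a selected ancestor is covered only if the nearest selected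
   proper ancestor v of u is, so the benefit earned inside T(u) depends on
   the selection above u only through v.  Splitting at u, this benefit is
   B_u({u, v}) plus the children's benefits with context u when u is
   selected, and the children's benefits with context v otherwise.
   Induction on the tree then shows that D(u, κ, v) bounds the benefit of
   every selection of at most κ internal nodes of T(u), and that
   ConstructSolution produces a selection attaining D(u, κ, v). *)

From HB Require Import structures.
From mathcomp Require Import all_boot all_order all_algebra.
From mathcomp Require Import zify.
Import Order.TTheory GRing.Theory Num.Theory.
Local Open Scope ring_scope.
Set Implicit Arguments. Unset Strict Implicit. Unset Printing Implicit Defensive.

Section ExtendedMax.
Variable R : realFieldType.
Implicit Types (a b : option R).

Definition ole a b : bool :=
  match a, b with
  | None, _ => true
  | Some x, Some y => x <= y
  | Some _, None => false
  end.

Lemma ole_refl a : ole a a.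
Proof. by case: a => //= x; rewrite lexx. Qed.

Lemma ole_trans a b c : ole a b -> ole b c -> ole a c.
Proof. by case: a b c => [x|] [y|] [z|] //=; exact: le_trans. Qed.

Lemma ole_omaxl a b : ole a (omax a b).
Proof. by case: a b => [x|] [y|] //=; rewrite ?le_max lexx. Qed.

Lemma ole_omaxr a b : ole b (omax a b).
Proof. by case: a b => [x|] [y|] //=; rewrite ?le_max lexx ?orbT. Qed.

Lemma omax_eq a b : omax a b = a \/ omax a b = b.
Proof.
case: a b => [x|] [y|] /=; auto.
by rewrite /Num.max; case: ifP; auto.
Qed.

Lemma omax_other a b z : omax a b = Some z -> omax a b <> a -> b = Some z.
Proof. by move=> abz; case: (omax_eq a b) => eq_ab //; rewrite -eq_ab. Qed.

Lemma oadd_ole a a' b b' : ole a a' -> ole b b' -> ole (oadd a b) (oadd a' b').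
Proof. by case: a a' b b' => [x|] [x'|] [y|] [y'|] //=; exact: lerD. Qed.

Lemma ole_oadd2l x y b : ole (Some y) b -> ole (Some (x + y)) (oadd (Some x) b).
Proof. exact: oadd_ole (ole_refl (Some x)). Qed.

Lemma oadd_some a b z : oadd a b = Some z ->
  exists x y, [/\ a = Some x, b = Some y & z = x + y].
Proof. by case: a b => [x|] [y|] //= [<-]; exists x, y. Qed.

Lemma bigomax_recl n (h : nat -> option R) :
  \big[@omax R/None]_(i < n.+1) h i = omax (h 0%N) (\big[@omax R/None]_(i < n) h i.+1).
Proof. by rewrite big_ord_recl. Qed.

Lemma bigomax_attained n (h : nat -> option R) :
  exists2 j, (j <= n)%N & \big[@omax R/None]_(i < n.+1) h i = h j.
Proof.
elim: n h => [|n IHn] h.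
  by rewrite bigomax_recl big_ord0; exists 0%N => //; case: (h 0%N).
rewrite bigomax_recl; have [j le_jn ->] := IHn (fun i => h i.+1).
by case: (omax_eq (h 0%N) (h j.+1)) => ->; [exists 0%N | exists j.+1].
Qed.

Lemma ole_bigomax n (h : nat -> option R) j : (j <= n)%N ->
  ole (h j) (\big[@omax R/None]_(i < n.+1) h i).
Proof.
elim: n h j => [|n IHn] h [|j] le_jn; rewrite bigomax_recl ?ole_omaxl //.
exact: ole_trans (IHn (fun i => h i.+1) j le_jn) (ole_omaxr _ _).
Qed.

Lemma splitmax_attained (F G : nat -> option R) n :
  exists2 i, (i <= n)%N & oadd (F i) (G (n - i)%N) = splitmax F G n.
Proof.
rewrite /splitmax; have [i le_in ->] := bigomax_attained n (fun i => oadd (F i) (G (n - i)%N)).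
by exists i.
Qed.

Lemma ole_splitmax (F G : nat -> option R) n i x y : (i <= n)%N ->
  ole (Some x) (F i) -> ole (Some y) (G (n - i)%N) -> ole (Some (x + y)) (splitmax F G n).
Proof.
move=> le_in xF yG; apply: ole_trans (oadd_ole xF yG) _.
exact: (ole_bigomax (fun i => oadd (F i) (G (n - i)%N)) le_in).
Qed.

End ExtendedMax.

Lemma split_budget (k bl br nl nr n : nat) :
  (nl <= bl)%N -> (nr <= br)%N -> (nl + nr <= n)%N -> (n <= k)%N ->
  (n <= minn k bl + minn k br)%N ->
  exists2 i, (i <= n)%N &
    [/\ (i <= minn k bl)%N, (n - i <= minn k br)%N, (nl <= i)%N & (nr <= n - i)%N].
Proof. by move=> *; exists (maxn nl (n - minn k br)); [lia | split; lia]. Qed.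

Section Addresses.
Implicit Types (u v w : addr) (b : bool).

Lemma prefix_rconsl u b w : prefix (rcons u b) w -> prefix u w.
Proof. exact: prefix_trans (prefix_rcons u b). Qed.

Lemma prefix_rcons_self u b : prefix (rcons u b) u = false.
Proof. by apply/negbTE/negP => /size_prefix; rewrite size_rcons ltnn. Qed.

Lemma prefix_rconsE u w :
  prefix u w = ((w == u) + prefix (rcons u false) w + prefix (rcons u true) w)%N :> nat.
Proof.
case: (boolP (prefix u w)) => [/prefixP[[|b a] ->] | not_uw].
- by rewrite cats0 eqxx !prefix_rcons_self.
- have -> : (u ++ b :: a == u) = false.
    by apply/negbTE/eqP => /(congr1 size); rewrite size_cat /=; lia.
  by rewrite -!cats1 !prefix_catr // eqxx !prefix_cons !prefix0s andbT; case: b.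
have [w_u | _] := eqVneq w u; first by rewrite w_u prefix_refl in not_uw.
by rewrite !(contraNF (@prefix_rconsl _ _ w)).
Qed.

Lemma prefix_rcons_neq u b w : prefix (rcons u b) w -> (w == u) = false.
Proof.
move=> ubw; have := prefix_rconsE u w; rewrite (prefix_rconsl ubw).
by case: b ubw => ->; case: (w == u); case: prefix.
Qed.

Lemma prefix_rcons_other u b w : prefix (rcons u b) w -> prefix (rcons u (~~ b)) w = false.
Proof.
move=> ubw; have := prefix_rconsE u w; rewrite (prefix_rconsl ubw).
by case: b ubw => ->; case: (w == u); case: prefix.
Qed.

Lemma big_prefix_split (V : Type) (idx : V) (op : Monoid.com_law idx) (F : addr -> V)
    (s : seq addr) u :
  \big[op/idx]_(w <- s | prefix u w) F w =
  op (op (\big[op/idx]_(w <- s | w == u) F w)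
         (\big[op/idx]_(w <- s | prefix (rcons u false) w) F w))
     (\big[op/idx]_(w <- s | prefix (rcons u true) w) F w).
Proof.
rewrite (big_mkcond (prefix u)) (big_mkcond (fun w => w == u)).
rewrite (big_mkcond (prefix (rcons u false))) (big_mkcond (prefix (rcons u true))) -!big_split.
apply: eq_bigr => w _ /=; have := prefix_rconsE u w.
by case: (prefix u w); case: (w == u); case: (prefix (rcons u false) w);
  case: (prefix (rcons u true) w) => //= _; rewrite ?Monoid.mul1m ?Monoid.mulm1.
Qed.

Lemma ancestors_rcons u b : ancestors (rcons u b) = rcons (ancestors u) u.
Proof.
rewrite /ancestors size_rcons -addn1 iotaD add0n map_cat /= cats1.
congr rcons; last by rewrite -cats1 take_size_cat.
apply/eq_in_map => i; rewrite mem_iota add0n => /andP[_ lt_iu].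
by rewrite -cats1 takel_cat // ltnW.
Qed.

Lemma mem_ancestors v u : v \in ancestors u -> prefix v u && (size v < size u)%N.
Proof.
by case/mapP => i; rewrite mem_iota add0n => /andP[_ lt_iu] ->; rewrite prefix_take size_take lt_iu.
Qed.

Lemma ancestors_not_prefix v u : v \in ancestors u -> prefix u v = false.
Proof.
by case/mem_ancestors/andP => _ lt_vu; apply/negP => /size_prefix; rewrite leqNgt lt_vu.
Qed.

End Addresses.

Section Subtrees.
Variables (R : realFieldType) (X : finType).
Implicit Types (s : btree X R).

Lemma subtree_nil s : subtree s [::] = Some s.
Proof. by case: s. Qed.

Lemma subtree_cat s a b : subtree s (a ++ b) = obind (fun s1 => subtree s1 b) (subtree s a).
Proof. by elim: a s => [|x a IHa] [c|x' c l r] //=. Qed.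

Lemma subtree_child s u x c l r b : subtree s u = Some (BNode x c l r) ->
  subtree s (rcons u b) = Some (if b then r else l).
Proof. by move=> su; rewrite -cats1 subtree_cat su /= subtree_nil. Qed.

Lemma subtree_tvars s0 s a : subtree s0 a = Some s -> tvars s \subset tvars s0.
Proof.
elim: a s0 => [|b a IHa] s0; first by rewrite subtree_nil => -[<-].
case: s0 => [//|x c l r] /= /IHa /subset_trans; apply; apply: subset_trans (subsetUr [set x] _).
by case: b; [apply: subsetUr | apply: subsetUl].
Qed.

Fixpoint tree_addrs s (u : addr) : seq addr :=
  match s with
  | BLeaf _ => [:: u]
  | BNode _ _ l r => u :: tree_addrs l (rcons u false) ++ tree_addrs r (rcons u true)
  end.

Lemma size_tree_addrs s u : size (tree_addrs s u) = bsize s.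
Proof. by elim: s u => [c|x c l IHl r IHr] u //=; rewrite size_cat IHl IHr. Qed.

Lemma mem_tree_addrs s u a : subtree s a -> u ++ a \in tree_addrs s u.
Proof.
elim: s u a => [c|x c l IHl r IHr] u [|b a] //=; rewrite ?cats0 ?mem_head //.
move=> sa; rewrite in_cons mem_cat -cat_rcons.
by case: b sa => sa; [rewrite (IHr _ _ sa) !orbT | rewrite (IHl _ _ sa) orbT].
Qed.

End Subtrees.

Section Optimality.
Variables (R : realFieldType) (X Q : finType).
Variables (t : btree X R) (Pr : Q -> R) (Z : Q -> {set X}) (k : nat).
Hypothesis Pr_ge0 : forall q, 0 <= Pr q.
Implicit Types (u w : addr) (S Sl Sr Rs : seq addr) (s : btree X R).

Local Notation D := (Dt t Pr Z k).

Lemma vars_ancestor u s v : subtree t u = Some s -> v \in ancestors u ->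
  vars t u \subset vars t v.
Proof.
move=> tu /mem_ancestors/andP[/prefixP[a def_u] _]; move: tu; rewrite def_u /vars subtree_cat.
by case: (subtree t v) => [sv|] //= sva; rewrite sva; apply: subtree_tvars sva.
Qed.

Definition is_ctx (u : addr) (v : option addr) : bool :=
  if v is Some v' then v' \in ancestors u else true.

Definition ctx_covered (q : Q) (v : option addr) : bool :=
  if v is Some v' then vars t v' \subset Z q else false.

Lemma is_ctx_parent u b : is_ctx (rcons u b) (Some u).
Proof. by rewrite /= ancestors_rcons mem_rcons mem_head. Qed.

Lemma is_ctx_child u v b : is_ctx u v -> is_ctx (rcons u b) v.
Proof. by case: v => //= v' uv; rewrite ancestors_rcons mem_rcons in_cons uv orbT. Qed.

Lemma ctx_covered_sub u s v q : subtree t u = Some s -> is_ctx u v -> ctx_covered q v ->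
  vars t u \subset Z q.
Proof. by case: v => [v'|] //= tu uv; apply: subset_trans (vars_ancestor tu uv). Qed.

(* [qgain q s u b P] is the benefit earned inside T(u) under query [q] by
   the selection [P], where [s] is the subtree at [u] and [b] records
   whether a selected proper ancestor of [u] is covered by [Z q]. *)
Fixpoint qgain (q : Q) (s : btree X R) (u : addr) (b : bool) (P : pred addr) : R :=
  match s with
  | BLeaf _ => [&& P u, vars t u \subset Z q & ~~ b]%:R * Ctot t u
  | BNode _ _ l r =>
      [&& P u, vars t u \subset Z q & ~~ b]%:R * Ctot t u
      + qgain q l (rcons u false) (b || P u && (vars t u \subset Z q)) P
      + qgain q r (rcons u true) (b || P u && (vars t u \subset Z q)) P
  end.

Lemma qgain_blocked q s u P : qgain q s u true P = 0.
Proof. by elim: s u => [c|x c l IHl r IHr] u /=; rewrite ?andbF ?mul0r ?IHl ?IHr ?addr0. Qed.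

Lemma eq_qgain q s u b (P P' : pred addr) : (forall w, prefix u w -> P w = P' w) ->
  qgain q s u b P = qgain q s u b P'.
Proof.
elim: s u b => [c|x c l IHl r IHr] u b PP' /=; rewrite PP' ?prefix_refl //.
by rewrite IHl ?IHr // => w /prefix_rconsl; apply: PP'.
Qed.

Lemma qgain_eq0 q s u b (P : pred addr) : (forall w, prefix u w -> P w = false) ->
  qgain q s u b P = 0.
Proof.
elim: s u b => [c|x c l IHl r IHr] u b P0 /=; rewrite P0 ?prefix_refl /= ?mul0r ?add0r //.
by rewrite IHl ?IHr ?addr0 // => w /prefix_rconsl; apply: P0.
Qed.

Lemma qgain_le_Ctot q s u b P : costs_ge0 s -> subtree t u = Some s ->
  qgain q s u b P <= Ctot t u.
Proof.
elim: s u b => [c|x c l IHl r IHr] u b /= + tu.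
  by rewrite /Ctot tu /= => c_ge0; case: (_ && _); rewrite ?mul1r ?mul0r.
case/and3P => c_ge0 cl cr.
case: (boolP [&& P u, vars t u \subset Z q & ~~ b]) => [/and3P[Pu V _] | _].
  by rewrite Pu V orbT !qgain_blocked mul1r !addr0.
have tl := subtree_child false tu; have tr := subtree_child true tu.
rewrite mul0r add0r; apply: le_trans (lerD (IHl _ _ cl tl) (IHr _ _ cr tr)) _.
by rewrite /Ctot tl tr tu /= -addrA lerDr.
Qed.

Definition blocked (q : Q) (Rs : seq addr) (w : addr) : bool :=
  has (fun x => (x \in ancestors w) && (vars t x \subset Z q)) Rs.

Lemma blocked_rcons q Rs u b :
  blocked q Rs (rcons u b) = blocked q Rs u || (u \in Rs) && (vars t u \subset Z q).
Proof.
rewrite /blocked ancestors_rcons.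
apply/hasP/orP => [[x xR /andP[]]|[/hasP[x xR /andP[xu V]]|/andP[uR V]]].
- rewrite mem_rcons in_cons => /orP[/eqP x_u V|xu V]; first by right; rewrite -x_u xR V.
  by left; apply/hasP; exists x => //; rewrite xu V.
- by exists x => //; rewrite mem_rcons in_cons xu orbT V.
- by exists u => //; rewrite mem_rcons in_cons eqxx V.
Qed.

Lemma big_pred1_uniq (g : addr -> R) (Rs : seq addr) u : uniq Rs ->
  \sum_(w <- Rs | w == u) g w = (u \in Rs)%:R * g u.
Proof.
move=> uniqRs; case: (boolP (u \in Rs)) => uRs.
  by rewrite -big_filter (filter_pred1_uniq uniqRs uRs) big_seq1 mul1r.
by rewrite mul0r big1_seq // => w /andP[/eqP -> ]; rewrite (negbTE uRs).
Qed.

Lemma qgain_sum q Rs s u : uniq Rs -> subtree t u = Some s ->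
  (forall w, w \in Rs -> prefix u w -> subtree t w) ->
  \sum_(w <- Rs | prefix u w) (Iq t Z q w Rs)%:R * Ctot t w
    = qgain q s u (blocked q Rs u) (fun w => w \in Rs).
Proof.
move=> uniqRs; elim: s u => [c|x c l IHl r IHr] u tu inRs;
  rewrite big_prefix_split big_pred1_uniq //=; last first.
  rewrite (IHl _ (subtree_child false tu)); last by move=> w wR /prefix_rconsl; apply: inRs.
  rewrite (IHr _ (subtree_child true tu)); last by move=> w wR /prefix_rconsl; apply: inRs.
  by rewrite !blocked_rcons /Iq; case: (u \in Rs); rewrite ?mul1r ?mul0r.
have below_leaf b w : prefix (rcons u b) w -> w \in Rs -> false.
  move=> /[dup] /prefix_rconsl + /prefixP[a def_w] wR => /(inRs w wR).
  by rewrite def_w -cats1 -catA subtree_cat tu.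
rewrite !big1_seq ?addr0; first by rewrite /Iq; case: (u \in Rs); rewrite ?mul1r ?mul0r.
all: by move=> w /andP[/below_leaf nRs /nRs].
Qed.

(* [ctx_benefit s u v S] is the paper's B_u(S ∪ {v}), for [S] inside T(u)
   and [v] the nearest selected proper ancestor of [u]. *)
Definition ctx_benefit (s : btree X R) (u : addr) (v : option addr) (S : seq addr) : R :=
  \sum_(q : Q) Pr q * qgain q s u (ctx_covered q v) (fun w => w \in S).

Lemma benefit_ctx Rs : uniq Rs -> all (is_internal t) Rs ->
  benefit t Pr Z Rs = ctx_benefit t [::] None Rs.
Proof.
move=> uniqRs inRs; rewrite /benefit /ctx_benefit /EI.
under eq_bigr do rewrite mulr_suml.
rewrite exchange_big /=; apply: eq_bigr => q _.
have blocked_root : blocked q Rs [::] = false by rewrite /blocked; elim: Rs {uniqRs inRs}.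
rewrite -blocked_root -qgain_sum ?subtree_nil //; last first.
  by move=> w /(allP inRs); rewrite /is_internal; case: (subtree t w).
by rewrite mulr_sumr (eq_bigl _ _ (fun w => prefix0s w)); apply: eq_bigr => w _; rewrite mulrA.
Qed.

Lemma eq_ctx_benefit s u v S S' : (forall w, prefix u w -> (w \in S) = (w \in S')) ->
  ctx_benefit s u v S = ctx_benefit s u v S'.
Proof. by move=> PP'; apply: eq_bigr => q _; rewrite (eq_qgain _ _ _ PP'). Qed.

Lemma ctx_benefit_nil s u v : ctx_benefit s u v [::] = 0.
Proof. by rewrite /ctx_benefit big1 // => q _; rewrite qgain_eq0 ?mulr0. Qed.

Lemma ctx_benefit_leaf c u v S : u \notin S -> ctx_benefit (BLeaf c) u v S = 0.
Proof. by move=> uS; rewrite /ctx_benefit big1 // => q _ /=; rewrite (negbTE uS) mul0r mulr0. Qed.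

Lemma BpairE u s v : subtree t u = Some s -> is_ctx u v ->
  Bpair t Pr Z u v =
  \sum_(q : Q) Pr q * ((vars t u \subset Z q) && ~~ ctx_covered q v)%:R * Ctot t u.
Proof.
move=> tu uv; rewrite /Bpair /pbenefit big_cons prefix_refl.
have -> : \sum_(w <- eps_set v | prefix u w) EI t Pr Z w (u :: eps_set v) * Ctot t w = 0.
  by case: v uv => [v'|] //= uv; rewrite ?big_cons ?big_nil // ancestors_not_prefix.
rewrite addr0 /EI mulr_suml; apply: eq_bigr => q _.
have u_notin_anc : u \notin ancestors u by apply/negP => /mem_ancestors; rewrite ltnn andbF.
by rewrite /Iq mem_head /= (negbTE u_notin_anc); case: v uv => [v'|] //= ->; rewrite orbF.
Qed.

Definition sel_in (u : addr) (S : seq addr) : bool :=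
  [&& uniq S, all (prefix u) S & all (is_internal t) S].

Definition child_sel (u : addr) (b : bool) (S : seq addr) : seq addr :=
  [seq w <- S | prefix (rcons u b) w].

Lemma sel_in_rootE S : sel_in [::] S = uniq S && all (is_internal t) S.
Proof. by rewrite /sel_in (@eq_all _ (prefix [::]) predT (@prefix0s _)) all_predT. Qed.

Lemma sel_in_size u s S : subtree t u = Some s -> sel_in u S -> (size S <= bsize s)%N.
Proof.
move=> tu /and3P[uniqS /allP pS /allP iS]; rewrite -(size_tree_addrs s u).
apply: uniq_leq_size => // w wS; have /prefixP[a def_w] := pS w wS; rewrite def_w.
apply: mem_tree_addrs; move: (iS w wS).
by rewrite def_w /is_internal subtree_cat tu /=; case: subtree.
Qed.

Lemma sel_in_child u b S : sel_in u S -> sel_in (rcons u b) (child_sel u b S).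
Proof.
case/and3P=> uniqS _ iS; rewrite /sel_in filter_uniq // filter_all /=.
by rewrite all_filter; apply: sub_all iS => w iw; apply/implyP.
Qed.

Lemma size_child_sel u S : sel_in u S ->
  size S = ((u \in S) + size (child_sel u false S) + size (child_sel u true S))%N.
Proof.
case/and3P=> uniqS + _; rewrite all_count => /eqP <-.
by rewrite !size_filter -(count_uniq_mem u uniqS) -!sum1_count big_prefix_split.
Qed.

Lemma notin_rcons_sel u b S : all (prefix (rcons u b)) S -> u \notin S.
Proof. by move=> pS; apply/negP => /(allP pS); rewrite prefix_rcons_self. Qed.

Lemma child_sel_cons u b S : child_sel u b (u :: S) = child_sel u b S.
Proof. by rewrite /child_sel /= prefix_rcons_self. Qed.

Lemma child_sel_all u b S : all (prefix (rcons u b)) S -> child_sel u b S = S.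
Proof. exact/all_filterP. Qed.

Lemma child_sel_other u b S : all (prefix (rcons u (~~ b))) S -> child_sel u b S = [::].
Proof.
move=> pS; rewrite /child_sel (eq_in_filter (a2 := pred0)) ?filter_pred0 // => w.
by move/(allP pS)/prefix_rcons_other; rewrite negbK.
Qed.

Lemma child_sel_cat u b Sl Sr :
  all (prefix (rcons u false)) Sl -> all (prefix (rcons u true)) Sr ->
  child_sel u b (Sl ++ Sr) = if b then Sr else Sl.
Proof.
move=> pSl pSr; rewrite [LHS]filter_cat -!/(child_sel u b _); case: b.
  by rewrite (child_sel_other (b := true) pSl) (child_sel_all pSr).
by rewrite (child_sel_all pSl) (child_sel_other (b := false) pSr) cats0.
Qed.

Lemma sel_in_cat u Sl Sr : sel_in (rcons u false) Sl -> sel_in (rcons u true) Sr ->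
  sel_in u (Sl ++ Sr).
Proof.
case/and3P=> uniqSl pSl iSl /and3P[uniqSr pSr iSr].
rewrite /sel_in cat_uniq uniqSl uniqSr !all_cat iSl iSr !andbT /=; apply/andP; split.
  apply/hasP => -[w wSr wSl]; move: (allP pSl w wSl) (allP pSr w wSr).
  by move/(prefix_rcons_other (b := false)) ->.
by apply/andP; split; [apply: (sub_all _ pSl) | apply: (sub_all _ pSr)] => w; apply: prefix_rconsl.
Qed.

Lemma sel_in_cons u S : is_internal t u -> u \notin S -> sel_in u S -> sel_in u (u :: S).
Proof. by move=> iu uS /and3P[uniqS pS iS]; rewrite /sel_in /= uS uniqS prefix_refl iu pS iS. Qed.

Lemma ctx_benefit_child_sel s u b v S :
  ctx_benefit s (rcons u b) v (child_sel u b S) = ctx_benefit s (rcons u b) v S.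
Proof. by apply: eq_ctx_benefit => w ubw; rewrite mem_filter ubw. Qed.

Lemma Dt0 s u v : D s u 0 v = Some 0.
Proof.
elim: s u v => [c|x c l IHl r IHr] u v //=.
by rewrite /Dminus_of /splitmax big_ord_recl big_ord0 /= IHl subnn IHr /= addr0.
Qed.

Lemma Dt_nodeE x c l r u kap v :
  D (BNode x c l r) u kap v =
  if (kap <= minn k (bsize (BNode x c l r)))%N then
    omax (Dplus_of t Pr Z (D l (rcons u false)) (D r (rcons u true)) u v kap)
         (Dminus_of (D l (rcons u false)) (D r (rcons u true)) v kap)
  else None.
Proof. by []. Qed.

Definition Dt_ub (s : btree X R) (u : addr) : Prop :=
  forall v kap S, is_ctx u v -> (kap <= minn k (bsize s))%N -> sel_in u S ->
    (size S <= kap)%N -> ole (Some (ctx_benefit s u v S)) (D s u kap v).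

Section Node.
Variables (x : X) (c : R) (l r : btree X R) (u : addr).
Hypothesis tu : subtree t u = Some (BNode x c l r).

Local Notation node := (BNode x c l r).
Local Notation Dl := (D l (rcons u false)).
Local Notation Dr := (D r (rcons u true)).

Lemma ctx_benefit_node v S : is_ctx u v ->
  ctx_benefit node u v S =
  if u \in S then Bpair t Pr Z u v + ctx_benefit l (rcons u false) (Some u) (child_sel u false S)
                    + ctx_benefit r (rcons u true) (Some u) (child_sel u true S)
  else ctx_benefit l (rcons u false) v (child_sel u false S)
       + ctx_benefit r (rcons u true) v (child_sel u true S).
Proof.
move=> uv; rewrite !ctx_benefit_child_sel (BpairE tu uv) /ctx_benefit.
case: ifP => uS; rewrite -!big_split;
  apply: eq_bigr => q _ /=; rewrite uS /=; last by rewrite orbF mul0r add0r mulrDr.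
have -> : ctx_covered q v || (vars t u \subset Z q) = (vars t u \subset Z q).
  by case cov: (ctx_covered q v); rewrite //= (ctx_covered_sub tu uv cov).
by rewrite !mulrDr !mulrA.
Qed.

Lemma child_sel_sizes S : sel_in u S ->
  [/\ size S = ((u \in S) + size (child_sel u false S) + size (child_sel u true S))%N,
      (size (child_sel u false S) <= bsize l)%N & (size (child_sel u true S) <= bsize r)%N].
Proof.
move=> selS; split; first exact: size_child_sel.
- exact: sel_in_size (subtree_child false tu) (sel_in_child false selS).
- exact: sel_in_size (subtree_child true tu) (sel_in_child true selS).
Qed.

Lemma ctx_benefit_cons_cat v Sl Sr : is_ctx u v ->
  all (prefix (rcons u false)) Sl -> all (prefix (rcons u true)) Sr ->
  ctx_benefit node u v (u :: Sl ++ Sr) =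
  Bpair t Pr Z u v + ctx_benefit l (rcons u false) (Some u) Sl
  + ctx_benefit r (rcons u true) (Some u) Sr.
Proof.
by move=> uv pSl pSr; rewrite ctx_benefit_node // mem_head !child_sel_cons !child_sel_cat.
Qed.

Lemma ctx_benefit_cat v Sl Sr : is_ctx u v ->
  all (prefix (rcons u false)) Sl -> all (prefix (rcons u true)) Sr ->
  ctx_benefit node u v (Sl ++ Sr) =
  ctx_benefit l (rcons u false) v Sl + ctx_benefit r (rcons u true) v Sr.
Proof.
move=> uv pSl pSr; rewrite ctx_benefit_node // !child_sel_cat // mem_cat.
by rewrite (negbTE (notin_rcons_sel pSl)) (negbTE (notin_rcons_sel pSr)).
Qed.

Hypotheses (costs_node : costs_ge0 node).
Hypotheses (ub_l : Dt_ub l (rcons u false)) (ub_r : Dt_ub r (rcons u true)).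

(* Selecting [u] never loses: either [u] itself becomes counted, and [C(u)]
   dominates everything below it, or the blocking status below is unchanged. *)
Lemma ctx_benefit_cons_ge v S : u \notin S ->
  ctx_benefit node u v S <= ctx_benefit node u v (u :: S).
Proof.
move=> uS; apply: ler_sum => q _; apply: ler_wpM2l => //.
set b := ctx_covered q v.
case cov: ((vars t u \subset Z q) && ~~ b).
  apply: le_trans (qgain_le_Ctot q b (fun w => w \in S) costs_node tu) _.
  by case/andP: cov => V nb; rewrite /= mem_head V nb /= orbT !qgain_blocked mul1r !addr0.
have same_below b' (s : btree X R) (b0 : bool) :
    qgain q s (rcons u b0) b' (fun w => w \in S)
    = qgain q s (rcons u b0) b' (fun w => w \in u :: S).
  by apply: eq_qgain => w uw; rewrite in_cons (prefix_rcons_neq uw).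
rewrite /= mem_head (negbTE uS) /= cov orbF !same_below.
by have -> : b || (vars t u \subset Z q) = b by case: b cov; case: (_ \subset _).
Qed.

Lemma ole_Dplus v kap S : is_ctx u v -> (kap <= minn k (bsize node))%N -> sel_in u S ->
  (size S <= kap)%N -> u \in S ->
  ole (Some (ctx_benefit node u v S)) (Dplus_of t Pr Z Dl Dr u v kap).
Proof.
move=> uv le_kap selS sizeS uS; rewrite ctx_benefit_node // uS.
have [sizeE sizel sizer] := child_sel_sizes selS; rewrite uS in sizeE.
case: kap le_kap sizeS => [|kap] /= le_kap sizeS; first by rewrite sizeE in sizeS.
have [|||i le_ik [capl capr ubl ubr]] := split_budget (k := k) (n := kap) sizel sizer; try lia.
rewrite -addrA /Dplus_of; apply: ole_oadd2l.
apply: (ole_splitmax (F := fun j => Dl j (Some u)) (G := fun j => Dr j (Some u)) le_ik);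
  [apply: ub_l | apply: ub_r];
  by rewrite ?is_ctx_parent ?sel_in_child.
Qed.

Lemma ole_Dminus v kap S : is_ctx u v -> sel_in u S -> (size S <= kap)%N -> (kap <= k)%N ->
  (kap <= minn k (bsize l) + minn k (bsize r))%N -> u \notin S ->
  ole (Some (ctx_benefit node u v S)) (Dminus_of Dl Dr v kap).
Proof.
move=> uv selS sizeS le_kk le_kap uS; rewrite ctx_benefit_node // (negbTE uS).
have [sizeE sizel sizer] := child_sel_sizes selS; rewrite (negbTE uS) add0n in sizeE.
have [|i le_ik [capl capr ubl ubr]] := split_budget sizel sizer _ le_kk le_kap; first lia.
apply: (ole_splitmax le_ik); [apply: ub_l | apply: ub_r];
  by rewrite ?is_ctx_child ?sel_in_child.
Qed.

Lemma Dt_ub_node : Dt_ub node u.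
Proof.
move=> v kap S uv le_kap selS sizeS; rewrite Dt_nodeE le_kap.
have [uS | uS] := boolP (u \in S).
  exact: ole_trans (ole_Dplus uv le_kap selS sizeS uS) (ole_omaxl _ _).
have le_kk : (kap <= k)%N by move: le_kap; rewrite leq_min => /andP[].
have [fits | overflow] := leqP kap (minn k (bsize l) + minn k (bsize r)).
  exact: ole_trans (ole_Dminus uv selS sizeS le_kk fits uS) (ole_omaxr _ _).
apply: (@ole_trans _ _ (Some (ctx_benefit node u v (u :: S)))).
  exact: ctx_benefit_cons_ge.
apply: ole_trans _ (ole_omaxl _ _).
have [sizeE sizel sizer] := child_sel_sizes selS; rewrite (negbTE uS) add0n in sizeE.
apply: ole_Dplus => //=; last exact: mem_head.
  by apply: sel_in_cons; rewrite // /is_internal tu.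
by rewrite sizeE; lia.
Qed.

End Node.

Lemma Dt_ub_subtree s u : costs_ge0 s -> subtree t u = Some s -> Dt_ub s u.
Proof.
elim: s u => [c|x c l IHl r IHr] u cs tu; last first.
  have /and3P[_ cl cr] := cs.
  exact: Dt_ub_node tu cs (IHl _ cl (subtree_child false tu)) (IHr _ cr (subtree_child true tu)).
move=> v kap S _ le_kap /and3P[_ _ iS] _; rewrite ctx_benefit_leaf /= ?le_kap ?lexx //.
by apply/negP => /(allP iS); rewrite /is_internal tu.
Qed.

Lemma Construct_sound s u kap v S : Construct t Pr Z k s u kap v S ->
  subtree t u = Some s -> is_ctx u v -> forall d, D s u kap v = Some d ->
  [/\ sel_in u S, (size S <= kap)%N & ctx_benefit s u v S = d].
Proof.
elim=> {s u kap v S} [c u kap v | x c l r u v D1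
  | x c l r u kap v i Sl Sr lt1k DE le_ik spE _ IHl _ IHr
  | x c l r u kap v i Sl Sr DN le_ik spE _ IHl _ IHr] tu uv d.
- by rewrite ctx_benefit_nil /=; case: ifP => // _ [<-].
- rewrite D1 /Dplus_of /splitmax big_ord_recl big_ord0 /= !Dt0 /= => -[<-].
  have iu : is_internal t u by rewrite /is_internal tu.
  split => //; first by rewrite /sel_in /= prefix_refl iu.
  by rewrite (ctx_benefit_cons_cat tu (Sl := [::]) (Sr := [::])) // !ctx_benefit_nil !addr0.
- have iu : is_internal t u by rewrite /is_internal tu.
  case: kap lt1k DE le_ik spE IHr => // kap _ DE; rewrite succnK => le_ik spE IHr.
  rewrite DE /Dplus_of -spE => /oadd_some[_ [y [[<-] /oadd_some[dl [dr [Dl Dr ->]]] ->]]].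
  have [selSl sizeSl <-] := IHl (subtree_child false tu) (is_ctx_parent u false) _ Dl.
  have [selSr sizeSr <-] := IHr (subtree_child true tu) (is_ctx_parent u true) _ Dr.
  have /and3P[_ pSl _] := selSl; have /and3P[_ pSr _] := selSr.
  have uSlr : u \notin Sl ++ Sr.
    by rewrite mem_cat negb_or (notin_rcons_sel pSl) (notin_rcons_sel pSr).
  split; first exact: sel_in_cons iu uSlr (sel_in_cat selSl selSr).
    by rewrite /= size_cat; lia.
  by rewrite ctx_benefit_cons_cat // addrA.
- move=> Dd; move: Dd DN; rewrite Dt_nodeE; case: ifP => // _ Dd /(omax_other Dd).
  rewrite /Dminus_of -spE => /oadd_some[dl [dr [Dl Dr ->]]].
  have [selSl sizeSl <-] := IHl (subtree_child false tu) (is_ctx_child false uv) _ Dl.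
  have [selSr sizeSr <-] := IHr (subtree_child true tu) (is_ctx_child true uv) _ Dr.
  have /and3P[_ pSl _] := selSl; have /and3P[_ pSr _] := selSr.
  split; [exact: sel_in_cat | by rewrite size_cat; lia | exact: ctx_benefit_cat].
Qed.

Lemma Construct_exists s u kap v : exists S, Construct t Pr Z k s u kap v S.
Proof.
elim: s u kap v => [c|x c l IHl r IHr] u kap v; first by exists [::]; constructor.
case: (D (BNode x c l r) u kap v =P
      Dplus_of t Pr Z (D l (rcons u false)) (D r (rcons u true)) u v kap) => DE.
  case: kap DE => [|[|kap]] DE.
  - by rewrite Dt0 in DE.
  - by exists [:: u]; apply: CPlus1.
  have [i le_ik spE] := splitmax_attained (fun j => D l (rcons u false) j (Some u))
                                          (fun j => D r (rcons u true) j (Some u)) kap.+1.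
  have [Sl consl] := IHl (rcons u false) i (Some u).
  have [Sr consr] := IHr (rcons u true) (kap.+1 - i)%N (Some u).
  by exists (u :: Sl ++ Sr); apply: (CPlus (i := i) _ DE le_ik spE consl consr).
have [i le_ik spE] := splitmax_attained (fun j => D l (rcons u false) j v)
                                        (fun j => D r (rcons u true) j v) kap.
have [Sl consl] := IHl (rcons u false) i v.
have [Sr consr] := IHr (rcons u true) (kap - i)%N v.
by exists (Sl ++ Sr); apply: (CMinus (i := i) DE le_ik spE consl consr).
Qed.

End Optimality.

Theorem theorem1 (R : realFieldType) (X Q : finType) (t : btree X R)
    (Pr : Q -> R) (Z : Q -> {set X}) (k : nat) :
  (forall q, 0 <= Pr q) -> \sum_(q : Q) Pr q = 1 ->
  costs_ge0 t -> (0 < k)%N -> (k <= bsize t)%N ->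
  (exists S, Construct t Pr Z k t [::] k None S) /\
  (forall S, Construct t Pr Z k t [::] k None S ->
     [/\ feasible t k S,
         (forall Rs, feasible t k Rs -> benefit t Pr Z Rs <= benefit t Pr Z S) &
         Dt t Pr Z k t [::] k None = Some (benefit t Pr Z S)]).
Proof.
move=> Pr_ge0 _ costs_t _ le_kt; split=> [|S consS]; first exact: Construct_exists.
have ub Rs : feasible t k Rs -> ole (Some (benefit t Pr Z Rs)) (Dt t Pr Z k t [::] k None).
  case=> uniqRs iRs sizeRs; rewrite benefit_ctx //; apply: Dt_ub_subtree => //.
  - exact: subtree_nil.
  - by rewrite leq_min leqnn.
  - by rewrite sel_in_rootE uniqRs.
have [d Dd] : exists d, Dt t Pr Z k t [::] k None = Some d.
  by move: (ub [::] (And3 erefl erefl erefl)); case: Dt => // d; exists d.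
have [] := Construct_sound consS (subtree_nil t) erefl Dd.
rewrite sel_in_rootE => /andP[uniqS iS] sizeS WS.
have benefitS : benefit t Pr Z S = d by rewrite benefit_ctx.
by split=> [|Rs /ub|]; rewrite ?Dd ?benefitS.
Qed.
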